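(* Let $F$ be a smooth distribution supported on $[0,1]$ with convex CDF (i.e. non-decreasing PDF $f$), and let $\epsilon>0$. Suppose we have access to a perturbed oracle $F^*$ which, when queried at $x$, returns $F^*(x)=F(x+\epsilon_1)+\epsilon_2$ for some unknown $\epsilon_1\in[-\epsilon^2/2,\epsilon^2/2]$ and $\epsilon_2\in[-\epsilon,\epsilon]$ (which may differ from query to query). Then $\tilde{O}(\epsilon^{-1/2})$ queries to $F^*$ suffice to learn $F$ within Lévy distance $O(\epsilon)$.
   Context: A distribution is smooth if it has no point masses and its PDF $f$ is $C^1$. Learning within Lévy distance $\eta$ means outputting $\hat F$ with $\mathrm{L\acute{e}vy}(F,\hat F)\le\eta$, where $\mathrm{L\acute{e}vy}(F,G)=\inf\{\epsilon: F(v-\epsilon)-\epsilon\le G(v)\le F(v+\epsilon)+\epsilon\ \forall v\}$. $\tilde{O}$ hides polylog$(1/\epsilon)$ factors. *)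

From Stdlib Require Import Reals List.
From Coquelicot Require Import Coquelicot.
Open Scope R_scope.

(** A smooth distribution supported on [0,1] with convex CDF, given by its
    CDF [F] and PDF [f]:
    - [F] is the CDF of a distribution supported on [0,1]: F = 0 on (-oo,0],
      F = 1 on [1,+oo), F non-decreasing;
    - no point masses: F is continuous everywhere;
    - the PDF f is C^1 on [0,1]: F' = f and f' = g on (0,1), g continuous on
      (0,1) with finite one-sided limits at 0 and 1 (i.e. f' extends
      continuously to [0,1]);
    - convex CDF, i.e. f non-decreasing on (0,1). *)
Definition smooth_convex_cdf (F f : R -> R) : Prop :=
  (forall x, x <= 0 -> F x = 0) /\
  (forall x, 1 <= x -> F x = 1) /\
  (forall x y, x <= y -> F x <= F y) /\
  (forall x, continuous F x) /\
  (exists g : R -> R,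
     (forall x, 0 < x < 1 -> is_derive F x (f x)) /\
     (forall x, 0 < x < 1 -> is_derive f x (g x)) /\
     (forall x, 0 < x < 1 -> continuous g x) /\
     (exists l0, filterlim g (at_right 0) (locally l0)) /\
     (exists l1, filterlim g (at_left 1) (locally l1))) /\
  (forall x y, 0 < x -> x <= y -> y < 1 -> f x <= f y).

Definition levy_cond (F G : R -> R) (e : R) : Prop :=
  forall v, F (v - e) - e <= G v <= F (v + e) + e.

Definition levy (F G : R -> R) : Rbar :=
  Glb_Rbar (fun e => 0 <= e /\ levy_cond F G e).

Definition valid_answer (eps : R) (F : R -> R) (x a : R) : Prop :=
  exists e1 e2, Rabs e1 <= eps ^ 2 / 2 /\ Rabs e2 <= eps /\ a = F (x + e1) + e2.

(** A deterministic adaptive query algorithm: it makes [nq] queries, the next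
    query point being a function of the answers received so far, and finally
    outputs a hypothesis CDF as a function of all answers. *)
Record query_alg := QueryAlg {
  nq : nat;
  next_query : list R -> R;
  output : list R -> (R -> R)
}.

(** [ans] is a possible full transcript of answers of the perturbed oracle
    (the adversary may choose the perturbations differently at each query,
    adaptively). *)
Definition consistent_run (eps : R) (F : R -> R) (A : query_alg) (ans : list R) : Prop :=
  length ans = nq A /\
  forall i, (i < nq A)%nat ->
    valid_answer eps F (next_query A (firstn i ans)) (nth i ans 0).

(* The map x |-> x + F x is an increasing bijection of R; its inverse Xi F is
   1-Lipschitz, maps [0,2] onto [0,1], and is concave on [0,2] since F is convex
   on [0,1].  An answer F(x+e1)+e2 compares x + e1 + F(x+e1) with u up to eps, so
   N steps of bisection compute Xi F u up to eps + eps^2/2 + 2^-N.  The algorithm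
   estimates Xi F by bisection on the grid u = 2i/m of [0,2] (phase A) and, for
   each slope q = k/m with k <= m+1, locates by ternary search the maximum of the
   concave function t |-> Xi F t - q t (phase B).  A node (u, x) with x ~ Xi F u
   is an approximate point (x, u - x) of the graph of F, and the output is the
   lower envelope of the segments joining such points.  Concavity of Xi F keeps
   the envelope above F up to the bisection error; the slope searches force Xi F
   to stay near its chord between consecutive nodes, which keeps it below F.
   With m ~ 2/sqrt eps and N ~ log2(2/eps) both errors are O(eps). *)

From Stdlib Require Import Reals List Lra Lia ZArith.
From Stdlib Require Import ClassicalEpsilon Classical.
From Coquelicot Require Import Coquelicot.
Open Scope R_scope.

Lemma Rabs_le_inv x a : Rabs x <= a -> -a <= x <= a.
Proof. unfold Rabs; destruct (Rcase_abs x); lra. Qed.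

Section SmoothConvexCdf.

Variables F f : R -> R.
Hypothesis HF : smooth_convex_cdf F f.

Lemma cdf_zero x : x <= 0 -> F x = 0.
Proof. apply HF. Qed.

Lemma cdf_one x : 1 <= x -> F x = 1.
Proof. apply HF. Qed.

Lemma cdf_mono x y : x <= y -> F x <= F y.
Proof. apply HF. Qed.

Lemma cdf_continuous x : continuity_pt F x.
Proof. apply continuity_pt_filterlim, HF. Qed.

Lemma cdf_range x : 0 <= F x <= 1.
Proof.
  split.
  - rewrite <- (cdf_zero (Rmin x 0)) by apply Rmin_r. apply cdf_mono, Rmin_l.
  - rewrite <- (cdf_one (Rmax x 1)) by apply Rmax_r. apply cdf_mono, Rmax_l.
Qed.

Lemma cdf_mvt a b : 0 <= a < b -> b <= 1 ->
  exists c, a < c < b /\ F b - F a = f c * (b - a).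
Proof.
  intros [Ha Hab] Hb.
  destruct HF as (_ & _ & _ & _ & (g & Hder & _) & _).
  assert (Hpr : forall c, a < c < b -> derivable_pt F c).
  { intros c Hc. exists (f c). apply is_derive_Reals, Hder. lra. }
  destruct (MVT F id a b Hpr (fun c _ => derivable_pt_id c) Hab) as (c & Hc & Eq).
  - intros c _. apply cdf_continuous.
  - intros c _. apply derivable_continuous_pt, derivable_pt_id.
  - exists c. split; [exact Hc|].
    assert (Ed : derive_pt F c (Hpr c Hc) = f c).
    { apply derive_pt_eq_0, is_derive_Reals, Hder. lra. }
    rewrite Ed, derive_pt_id in Eq. unfold id in Eq. lra.
Qed.

(* Since f is non-decreasing, slopes of F increase: the three-slope form of convexity. *)
Lemma cdf_slopes a c b : 0 <= a < c -> c < b -> b <= 1 ->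
  (F c - F a) * (b - c) <= (F b - F c) * (c - a).
Proof.
  intros Hac Hcb Hb.
  destruct (cdf_mvt a c) as (c1 & Hc1 & E1); [lra|lra|].
  destruct (cdf_mvt c b) as (c2 & Hc2 & E2); [lra|lra|].
  assert (Hf : f c1 <= f c2) by (apply HF; lra).
  rewrite E1, E2.
  assert (0 < (c - a) * (b - c)) by (apply Rmult_lt_0_compat; lra).
  nra.
Qed.

Lemma cdf_convex a b t : 0 <= a <= 1 -> 0 <= b <= 1 -> 0 <= t <= 1 ->
  F ((1 - t) * a + t * b) <= (1 - t) * F a + t * F b.
Proof.
  assert (Hlt : forall x y s, 0 <= x -> x < y -> y <= 1 -> 0 < s < 1 ->
     F ((1 - s) * x + s * y) <= (1 - s) * F x + s * F y).
  { intros x y s Hx Hxy Hy Hs. set (c := (1 - s) * x + s * y).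
    assert (Hc1 : x < c) by (unfold c; nra).
    assert (Hc2 : c < y) by (unfold c; nra).
    pose proof (cdf_slopes x c y ltac:(lra) Hc2 Hy) as S.
    replace (y - c) with ((1 - s) * (y - x)) in S by (unfold c; ring).
    replace (c - x) with (s * (y - x)) in S by (unfold c; ring).
    assert (Hyx : 0 < y - x) by lra.
    assert ((F c - F x) * (1 - s) - (F y - F c) * s <= 0) by nra.
    nra. }
  intros Ha Hb Ht.
  destruct (Req_dec t 0) as [->|Ht0].
  { replace ((1 - 0) * a + 0 * b) with a by ring. lra. }
  destruct (Req_dec t 1) as [->|Ht1].
  { replace ((1 - 1) * a + 1 * b) with b by ring. lra. }
  destruct (Rtotal_order a b) as [Hab|[<-|Hba]].
  - apply Hlt; lra.
  - replace ((1 - t) * a + t * a) with a by ring. lra.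
  - replace ((1 - t) * a + t * b) with ((1 - (1 - t)) * b + (1 - t) * a) by ring.
    pose proof (Hlt b a (1 - t)). lra.
Qed.

Lemma shift_strict x y : x < y -> x + F x < y + F y.
Proof. intros Hxy. pose proof (cdf_mono x y). lra. Qed.

Lemma shift_onto u : exists x, x + F x = u.
Proof.
  destruct (Rle_dec u 0) as [Hu|Hu].
  { exists u. rewrite (cdf_zero u Hu). ring. }
  destruct (Rle_dec 2 u) as [Hu2|Hu2].
  { exists (u - 1). rewrite (cdf_one (u - 1)) by lra. ring. }
  assert (C : continuity (fun x => x + F x - u)).
  { intros x. apply continuity_pt_minus; [|apply continuity_pt_const; intros ? ?; reflexivity].
    apply continuity_pt_plus; [apply continuity_pt_id|apply cdf_continuous]. }
  destruct (IVT _ 0 1 C) as (z & _ & Hz).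
  - lra.
  - rewrite (cdf_zero 0) by lra. lra.
  - rewrite (cdf_one 1) by lra. lra.
  - exists z. lra.
Qed.

End SmoothConvexCdf.

(* [Xi F] is the inverse of x |-> x + F x; the algorithm learns F through Xi F. *)
Definition Xi (F : R -> R) (u : R) : R := epsilon (inhabits 0) (fun x => x + F x = u).

Section InverseShift.

Variables F f : R -> R.
Hypothesis HF : smooth_convex_cdf F f.

Lemma Xi_spec u : Xi F u + F (Xi F u) = u.
Proof. unfold Xi. apply epsilon_spec, (shift_onto F f HF). Qed.

Lemma Xi_unique u x : x + F x = u -> Xi F u = x.
Proof.
  intros Hx. pose proof (Xi_spec u) as S.
  destruct (Rtotal_order (Xi F u) x) as [L|[E|G]]; [|exact E|].
  - pose proof (shift_strict F f HF _ _ L). lra.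
  - pose proof (shift_strict F f HF _ _ G). lra.
Qed.

Lemma Xi_mono u v : u <= v -> Xi F u <= Xi F v.
Proof.
  intros Huv. destruct (Rle_dec (Xi F u) (Xi F v)) as [|N]; [assumption|].
  pose proof (shift_strict F f HF (Xi F v) (Xi F u) ltac:(lra)) as S.
  rewrite !Xi_spec in S. lra.
Qed.

Lemma Xi_lip u v : u <= v -> Xi F v - Xi F u <= v - u.
Proof.
  intros Huv. pose proof (cdf_mono F f HF _ _ (Xi_mono u v Huv)).
  pose proof (Xi_spec u). pose proof (Xi_spec v). lra.
Qed.

Lemma Xi_0 : Xi F 0 = 0.
Proof. apply Xi_unique. rewrite (cdf_zero F f HF 0); lra. Qed.

Lemma Xi_2 : Xi F 2 = 1.
Proof. apply Xi_unique. rewrite (cdf_one F f HF 1); lra. Qed.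

Lemma Xi_range u : 0 <= u <= 2 -> 0 <= Xi F u <= 1.
Proof. intros Hu. rewrite <- Xi_0, <- Xi_2. split; apply Xi_mono; lra. Qed.

(* Xi F is concave on [0,2], being the inverse of the convex increasing map x + F x. *)
Lemma Xi_concave u1 u2 t : 0 <= u1 <= 2 -> 0 <= u2 <= 2 -> 0 <= t <= 1 ->
  (1 - t) * Xi F u1 + t * Xi F u2 <= Xi F ((1 - t) * u1 + t * u2).
Proof.
  intros H1 H2 Ht.
  set (xb := (1 - t) * Xi F u1 + t * Xi F u2).
  set (u := (1 - t) * u1 + t * u2).
  pose proof (cdf_convex F f HF _ _ t (Xi_range u1 H1) (Xi_range u2 H2) Ht) as C.
  fold xb in C.
  pose proof (Xi_spec u1). pose proof (Xi_spec u2). pose proof (Xi_spec u).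
  destruct (Rle_dec xb (Xi F u)) as [|N]; [assumption|].
  pose proof (shift_strict F f HF (Xi F u) xb ltac:(lra)).
  assert (xb + F xb <= u) by (unfold xb at 1, u; nra).
  lra.
Qed.

Lemma Xi_concave3 a b c : 0 <= a -> a <= b -> b <= c -> c <= 2 ->
  (c - b) * Xi F a + (b - a) * Xi F c <= (c - a) * Xi F b.
Proof.
  intros Ha Hab Hbc Hc.
  destruct (Req_dec a c) as [<-|Hac].
  { replace b with a by lra. lra. }
  set (t := (b - a) / (c - a)).
  assert (Et : b = (1 - t) * a + t * c) by (unfold t; field; lra).
  assert (Ht : 0 <= t <= 1).
  { split; [unfold t; apply Rdiv_le_0_compat; lra|].
    assert (t * (c - a) = b - a) by (unfold t; field; lra). nra. }
  pose proof (Xi_concave a c t ltac:(lra) ltac:(lra) Ht) as K. rewrite <- Et in K.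
  replace (c - b) with ((1 - t) * (c - a)) by (rewrite Et; ring).
  replace (b - a) with (t * (c - a)) by (rewrite Et; ring).
  assert (0 < c - a) by lra. nra.
Qed.

End InverseShift.

Lemma concave_extrapolate a b c ga gb gc d :
  a < b -> b <= c -> c - b <= b - a -> 0 <= d -> gb <= ga + d ->
  (c - b) * ga + (b - a) * gc <= (c - a) * gb -> gc <= gb + d.
Proof.
  intros Hab Hbc Hcb Hd Hg Hconc.
  assert (Hstep : (b - a) * (gc - gb) <= (b - a) * d).
  { apply Rle_trans with ((c - b) * (gb - ga)); [nra|].
    apply Rle_trans with ((c - b) * d); [apply Rmult_le_compat_l; lra|].
    apply Rmult_le_compat_r; lra. }
  apply Rmult_le_reg_l in Hstep; lra.
Qed.

Lemma concave_above_min a b c ga gb gc l :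
  a <= b -> b <= c -> a < c -> l <= ga -> l <= gc ->
  (c - b) * ga + (b - a) * gc <= (c - a) * gb -> l <= gb.
Proof.
  intros Hab Hbc Hac Ha Hc Hconc.
  assert (Hl : (c - a) * l <= (c - a) * gb).
  { apply Rle_trans with ((c - b) * ga + (b - a) * gc); [nra|exact Hconc]. }
  apply Rmult_le_reg_l in Hl; lra.
Qed.

(* [psi F q t = Xi F t - q t] is concave; maximising it over t finds the point where
   Xi F has slope q.  Running this for all slopes q = k/m locates the chords of Xi F. *)
Definition psi (F : R -> R) (q t : R) : R := Xi F t - q * t.

Section Psi.

Variables F f : R -> R.
Hypothesis HF : smooth_convex_cdf F f.

Lemma psi_lip q t s : 0 <= q <= 2 -> psi F q t <= psi F q s + 2 * Rabs (t - s).
Proof.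
  intros Hq. unfold psi.
  destruct (Rle_dec s t) as [L|L].
  - pose proof (Xi_lip F f HF s t L). rewrite Rabs_right by lra. nra.
  - pose proof (Xi_mono F f HF t s ltac:(lra)). rewrite Rabs_left by lra. nra.
Qed.

Lemma psi_concave3 q a b c : 0 <= a -> a <= b -> b <= c -> c <= 2 ->
  (c - b) * psi F q a + (b - a) * psi F q c <= (c - a) * psi F q b.
Proof.
  intros Ha Hab Hbc Hc. pose proof (Xi_concave3 F f HF a b c Ha Hab Hbc Hc).
  unfold psi. nra.
Qed.

End Psi.

Definition strat := list R -> R.

Definition valid_run (eps : R) (F : R -> R) (P : strat) (l : list R) : Prop :=
  forall i, (i < length l)%nat -> valid_answer eps F (P (firstn i l)) (nth i l 0).

Definition seq_strat (L : nat) (P1 : strat) (P2 : list R -> strat) : strat :=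
  fun l => if Nat.ltb (length l) L then P1 l else P2 (firstn L l) (skipn L l).

Lemma valid_seq eps F L P1 P2 l :
  valid_run eps F (seq_strat L P1 P2) l -> (L <= length l)%nat ->
  valid_run eps F P1 (firstn L l) /\ valid_run eps F (P2 (firstn L l)) (skipn L l).
Proof.
  intros V HL. split.
  - intros i Hi. rewrite length_firstn in Hi.
    rewrite firstn_firstn, Nat.min_l by lia.
    rewrite nth_firstn. destruct (Nat.ltb_spec i L); [|lia].
    specialize (V i ltac:(lia)). unfold seq_strat in V.
    rewrite length_firstn, Nat.min_l in V by lia.
    destruct (Nat.ltb_spec i L); [exact V|lia].
  - intros i Hi. rewrite length_skipn in Hi.
    specialize (V (L + i)%nat ltac:(lia)). unfold seq_strat in V.
    rewrite length_firstn, Nat.min_l in V by lia.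
    destruct (Nat.ltb_spec (L + i) L); [lia|].
    rewrite firstn_firstn, Nat.min_l, skipn_firstn_comm in V by lia.
    replace (L + i - L)%nat with i in V by lia.
    rewrite nth_skipn. exact V.
Qed.

Lemma valid_snoc eps F P l a : valid_run eps F P (l ++ a :: nil) ->
  valid_run eps F P l /\ valid_answer eps F (P l) a.
Proof.
  intros V. split.
  - intros i Hi. specialize (V i). rewrite length_app in V. simpl in V.
    specialize (V ltac:(lia)).
    rewrite firstn_app, (proj2 (Nat.sub_0_le i (length l))), app_nil_r in V by lia.
    rewrite app_nth1 in V by lia. exact V.
  - specialize (V (length l)). rewrite length_app in V. simpl in V.
    specialize (V ltac:(lia)).
    rewrite firstn_app, Nat.sub_diag, app_nil_r, firstn_all, nth_middle in V. exact V.
Qed.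

(* [n] consecutive phases of [L] queries each: phase strategy [P s] in state [s],
   the state being updated by [upd] from the answers of the phase.  [repeat_nodes]
   collects the data points [g s l1] that each phase extracts from its answers. *)
Fixpoint repeat_strat {St : Type} (L : nat) (P : St -> strat) (upd : St -> list R -> St)
    (n : nat) (s : St) : strat :=
  match n with
  | O => fun _ => 0
  | S n' => seq_strat L (P s) (fun l1 => repeat_strat L P upd n' (upd s l1))
  end.

Fixpoint repeat_nodes {St : Type} (L : nat) (g : St -> list R -> list (R * R))
    (upd : St -> list R -> St) (n : nat) (s : St) (l : list R) : list (R * R) :=
  match n with
  | O => nil
  | S n' => g s (firstn L l) ++ repeat_nodes L g upd n' (upd s (firstn L l)) (skipn L l)
  end.

Lemma repeat_nodes_good eps F L (P : nat -> strat) (g : nat -> list R -> list (R * R))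
    (good : R * R -> Prop) n s l :
  valid_run eps F (repeat_strat L P (fun k _ => S k) n s) l -> length l = (n * L)%nat ->
  (forall k l1, (s <= k < s + n)%nat -> valid_run eps F (P k) l1 -> length l1 = L ->
     forall z, In z (g k l1) -> good z) ->
  forall z, In z (repeat_nodes L g (fun k _ => S k) n s l) -> good z.
Proof.
  revert s l. induction n as [|n IH]; intros s l V Hl Hg z Hz; [destruct Hz|].
  cbn [repeat_nodes] in Hz. cbn [repeat_strat] in V. simpl in Hl.
  destruct (valid_seq eps F _ _ _ l V) as [V1 V2]; [lia|].
  apply in_app_or in Hz. destruct Hz as [Hz|Hz].
  - eapply Hg; [|exact V1| |exact Hz]; [lia|rewrite length_firstn; lia].
  - apply (IH (S s) (skipn L l)); auto.
    + rewrite length_skipn. lia.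
    + intros k l1 Hk. apply Hg. lia.
Qed.

Lemma repeat_nodes_phase eps F L (P : nat -> strat) (g : nat -> list R -> list (R * R))
    (Q : nat -> list (R * R) -> Prop) n s l :
  (forall k l1 l2, Q k l1 -> Q k (l1 ++ l2)) -> (forall k l1 l2, Q k l2 -> Q k (l1 ++ l2)) ->
  valid_run eps F (repeat_strat L P (fun k _ => S k) n s) l -> length l = (n * L)%nat ->
  (forall k l1, (s <= k < s + n)%nat -> valid_run eps F (P k) l1 -> length l1 = L ->
     Q k (g k l1)) ->
  forall k, (s <= k < s + n)%nat -> Q k (repeat_nodes L g (fun k _ => S k) n s l).
Proof.
  intros Ql Qr. revert s l. induction n as [|n IH]; intros s l V Hl Hg k Hk; [lia|].
  cbn [repeat_nodes]. cbn [repeat_strat] in V. simpl in Hl.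
  destruct (valid_seq eps F _ _ _ l V) as [V1 V2]; [lia|].
  destruct (Nat.eq_dec k s) as [->|Hks].
  - apply Ql, Hg; [lia|exact V1|rewrite length_firstn; lia].
  - apply Qr, (IH (S s)); [exact V2|rewrite length_skipn; lia| |lia].
    intros k' l1 Hk'. apply Hg. lia.
Qed.

Definition bis_err (eps : R) (N : nat) : R := eps + eps ^ 2 / 2 + (/ 2) ^ N.

Lemma bis_err_nonneg eps N : 0 <= eps -> 0 <= bis_err eps N.
Proof.
  intros He. unfold bis_err.
  pose proof (pow_le (/ 2) N ltac:(lra)). pose proof (pow2_ge_0 eps). lra.
Qed.

(* Bisection for the solution of x + F x = u in [0,1]: the state is the current
   bracket, halved after each (perturbed) evaluation at its midpoint. *)
Definition bis_step (u : R) (s : R * R) (a : R) : R * R :=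
  let m := (fst s + snd s) / 2 in if Rlt_dec (m + a) u then (m, snd s) else (fst s, m).
Definition bis_state (u : R) (l : list R) : R * R := fold_left (bis_step u) l (0, 1).
Definition Bis (u : R) : strat := fun l => (fst (bis_state u l) + snd (bis_state u l)) / 2.
Definition bis_res (u : R) (l : list R) : R := fst (bis_state u l).

Section Bisection.

Variables F f : R -> R.
Hypothesis HF : smooth_convex_cdf F f.
Variable eps : R.
Hypothesis Heps : 0 < eps < 1.

(* Perturbations can only mislead bisection about u by eps (vertically) and
   eps^2/2 (horizontally): the bracket always meets [Xi(u-eps), Xi(u+eps)]. *)
Lemma bis_invariant u l : 0 <= u <= 2 -> valid_run eps F (Bis u) l ->
  fst (bis_state u l) <= Xi F (u + eps) + eps ^ 2 / 2 /\
  Xi F (u - eps) - eps ^ 2 / 2 <= snd (bis_state u l) /\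
  snd (bis_state u l) - fst (bis_state u l) = (/ 2) ^ (length l).
Proof.
  intros Hu. induction l as [|a l IH] using rev_ind; intros V.
  - unfold bis_state; simpl.
    pose proof (Xi_mono F f HF 0 (u + eps)). pose proof (Xi_mono F f HF (u - eps) 2).
    rewrite (Xi_0 F f HF) in *. rewrite (Xi_2 F f HF) in *. pose proof (pow2_ge_0 eps).
    split; [|split]; lra.
  - destruct (valid_snoc _ _ _ _ _ V) as [V1 Va]. destruct (IH V1) as (I1 & I2 & I3).
    unfold bis_state in *. rewrite fold_left_app, length_app, Nat.add_1_r. simpl pow.
    set (s := fold_left (bis_step u) l (0, 1)) in *.
    unfold Bis, bis_state in Va. fold s in Va.
    destruct Va as (e1 & e2 & He1%Rabs_le_inv & He2%Rabs_le_inv & Ea).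
    simpl fold_left. unfold bis_step. set (m := (fst s + snd s) / 2) in *.
    destruct (Rlt_dec (m + a) u) as [Lt|Ge]; simpl.
    + split; [|split]; [|lra|unfold m; lra].
      destruct (Rle_dec m (Xi F (u + eps) + eps ^ 2 / 2)) as [|N]; [assumption|].
      pose proof (cdf_mono F f HF (Xi F (u + eps)) (m + e1) ltac:(lra)).
      pose proof (Xi_spec F f HF (u + eps)). lra.
    + split; [|split]; [lra| |unfold m; lra].
      destruct (Rle_dec (Xi F (u - eps) - eps ^ 2 / 2) m) as [|N]; [assumption|].
      pose proof (cdf_mono F f HF (m + e1) (Xi F (u - eps)) ltac:(lra)).
      pose proof (Xi_spec F f HF (u - eps)). lra.
Qed.

Lemma bis_correct u l : 0 <= u <= 2 -> valid_run eps F (Bis u) l ->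
  Rabs (bis_res u l - Xi F u) <= bis_err eps (length l).
Proof.
  intros Hu V. destruct (bis_invariant u l Hu V) as (I1 & I2 & I3). unfold bis_res.
  pose proof (Xi_lip F f HF u (u + eps) ltac:(lra)).
  pose proof (Xi_lip F f HF (u - eps) u ltac:(lra)).
  pose proof (Xi_mono F f HF u (u + eps) ltac:(lra)).
  pose proof (Xi_mono F f HF (u - eps) u ltac:(lra)).
  pose proof (pow2_ge_0 eps). pose proof (pow_le (/ 2) (length l) ltac:(lra)).
  apply Rabs_le. unfold bis_err. lra.
Qed.

End Bisection.

Definition good_node (F : R -> R) (dd : R) (z : R * R) : Prop :=
  0 <= fst z <= 2 /\ Rabs (snd z - Xi F (fst z)) <= dd.

(* One round of ternary search for the maximum of psi F q on the bracket s:
   Xi F is estimated by bisection at the two trisection points, and the third of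
   the bracket beyond the point with the smaller estimated psi value is discarded. *)
Definition tern_lo (s : R * R) : R := fst s + (snd s - fst s) / 3.
Definition tern_hi (s : R * R) : R := fst s + 2 * (snd s - fst s) / 3.
Definition tern_phase (N : nat) (s : R * R) : strat :=
  seq_strat N (Bis (tern_lo s)) (fun _ => Bis (tern_hi s)).
Definition tern_nodes (N : nat) (s : R * R) (l : list R) : list (R * R) :=
  (tern_lo s, bis_res (tern_lo s) (firstn N l)) ::
  (tern_hi s, bis_res (tern_hi s) (skipn N l)) :: nil.
Definition tern_update (N : nat) (q : R) (s : R * R) (l : list R) : R * R :=
  let x1 := bis_res (tern_lo s) (firstn N l) in
  let x2 := bis_res (tern_hi s) (skipn N l) in
  if Rle_dec (x2 - q * tern_hi s) (x1 - q * tern_lo s)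
  then (fst s, tern_hi s) else (tern_lo s, snd s).

Lemma tern_update_bracket N q s l : fst s <= snd s ->
  let s' := tern_update N q s l in
  fst s <= fst s' <= tern_lo s /\ tern_lo s <= snd s' <= snd s /\
  snd s' - fst s' = 2 / 3 * (snd s - fst s).
Proof.
  intros Hs s'. unfold s', tern_update, tern_lo, tern_hi.
  destruct Rle_dec; simpl; lra.
Qed.

Section TernarySearch.

Variables F f : R -> R.
Hypothesis HF : smooth_convex_cdf F f.
Variable eps : R.
Hypothesis Heps : 0 < eps < 1.
Variable N : nat.
Variable q : R.

Let dd := bis_err eps N.

Lemma tern_phase_good s l : 0 <= fst s <= snd s -> snd s <= 2 ->
  valid_run eps F (tern_phase N s) l -> length l = (2 * N)%nat ->
  forall z, In z (tern_nodes N s l) -> good_node F dd z.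
Proof.
  intros Hs1 Hs2 V Hl.
  destruct (valid_seq eps F N _ _ l V) as [V1 V2]; [lia|].
  assert (Hlo : 0 <= tern_lo s <= 2) by (unfold tern_lo; lra).
  assert (Hhi : 0 <= tern_hi s <= 2) by (unfold tern_hi; lra).
  pose proof (bis_correct F f HF eps Heps _ _ Hlo V1) as B1.
  pose proof (bis_correct F f HF eps Heps _ _ Hhi V2) as B2.
  rewrite length_firstn, Nat.min_l in B1 by lia.
  rewrite length_skipn in B2. replace (length l - N)%nat with N in B2 by lia.
  intros z [<-|[<-|[]]]; split; simpl; assumption.
Qed.

Lemma tern_discard s l t : 0 <= fst s <= snd s -> snd s <= 2 ->
  valid_run eps F (tern_phase N s) l -> length l = (2 * N)%nat ->
  fst s <= t <= snd s ->
  let s' := tern_update N q s l in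
  fst s' <= t <= snd s' \/
  exists z, In z (tern_nodes N s l) /\ psi F q t <= psi F q (fst z) + 2 * dd.
Proof.
  intros Hs1 Hs2 V Hl Ht s'.
  pose proof (tern_phase_good s l Hs1 Hs2 V Hl) as G.
  destruct (G _ (or_introl eq_refl)) as [_ B1%Rabs_le_inv].
  destruct (G _ (or_intror (or_introl eq_refl))) as [_ B2%Rabs_le_inv].
  simpl in B1, B2.
  set (x1 := bis_res (tern_lo s) (firstn N l)) in *.
  set (x2 := bis_res (tern_hi s) (skipn N l)) in *.
  assert (Hd : 0 <= dd) by (apply bis_err_nonneg; lra).
  assert (E : tern_hi s - tern_lo s = (snd s - fst s) / 3) by (unfold tern_lo, tern_hi; field).
  unfold s', tern_update. fold x1 x2.
  destruct (Rle_dec (x2 - q * tern_hi s) (x1 - q * tern_lo s)) as [C|C]; simpl.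
  - destruct (Rle_dec t (tern_hi s)) as [L|L]; [left; lra|right].
    exists (tern_hi s, x2). split; [simpl; auto|]. simpl.
    pose proof (psi_concave3 F f HF q (tern_lo s) (tern_hi s) t) as K.
    apply (concave_extrapolate (tern_lo s) (tern_hi s) t (psi F q (tern_lo s)));
      unfold psi, tern_lo, tern_hi in *; lra.
  - destruct (Rle_dec (tern_lo s) t) as [L|L]; [left; lra|right].
    exists (tern_lo s, x1). split; [simpl; auto|]. simpl.
    pose proof (psi_concave3 F f HF q t (tern_lo s) (tern_hi s)) as K.
    apply (concave_extrapolate (- tern_hi s) (- tern_lo s) (- t) (psi F q (tern_hi s)));
      unfold psi, tern_lo, tern_hi in *; lra.
Qed.

Hypothesis Hq : 0 <= q <= 2.

Lemma tern_rounds n s l : 0 <= fst s <= snd s -> snd s <= 2 ->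
  valid_run eps F (repeat_strat (2 * N) (tern_phase N) (tern_update N q) (S n) s) l ->
  length l = (S n * (2 * N))%nat ->
  let nodes := repeat_nodes (2 * N) (tern_nodes N) (tern_update N q) (S n) s l in
  (forall z, In z nodes -> good_node F dd z) /\
  (forall t, fst s <= t <= snd s -> exists z, In z nodes /\
     psi F q t <= psi F q (fst z) + 2 * dd + 2 * ((2 / 3) ^ (S n) * (snd s - fst s))).
Proof.
  revert s l. induction n as [|n IH]; intros s l Hs1 Hs2 V Hl nodes; unfold nodes.
  all: cbn [repeat_nodes]; cbn [repeat_strat] in V.
  all: destruct (valid_seq eps F _ _ _ l V) as [V1 V2]; [lia|].
  all: assert (L1 : length (firstn (2 * N) l) = (2 * N)%nat) by (rewrite length_firstn; lia).
  all: pose proof (tern_phase_good s _ Hs1 Hs2 V1 L1) as G.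
  all: pose proof (tern_discard s (firstn (2 * N) l)) as D.
  all: pose proof (tern_update_bracket N q s (firstn (2 * N) l) ltac:(lra)) as Br.
  all: set (s' := tern_update N q s (firstn (2 * N) l)) in *.
  all: assert (Hd : 0 <= dd) by (apply bis_err_nonneg; lra).
  - split; [intros z Hz; apply in_app_or in Hz; destruct Hz as [Hz|[]]; auto|].
    intros t Ht. destruct (D t Hs1 Hs2 V1 L1 Ht) as [Hin|(z & Hz & Pz)].
    + exists (tern_lo s, bis_res (tern_lo s) (firstn N (firstn (2 * N) l))).
      split; [apply in_or_app; left; simpl; auto|]. simpl fst.
      pose proof (psi_lip F f HF q t (tern_lo s) Hq).
      assert (Rabs (t - tern_lo s) <= 2 / 3 * (snd s - fst s)) by (apply Rabs_le; lra).
      simpl pow. lra.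
    + exists z. split; [apply in_or_app; auto|]. simpl pow.
      assert (0 <= 2 / 3 * 1 * (snd s - fst s)) by lra. lra.
  - assert (L2 : length (skipn (2 * N) l) = (S n * (2 * N))%nat)
      by (rewrite length_skipn; lia).
    destruct (IH s' (skipn (2 * N) l) ltac:(lra) ltac:(lra) V2 L2) as [IG IC].
    split; [intros z Hz; apply in_app_or in Hz; destruct Hz; auto|].
    intros t Ht. destruct (D t Hs1 Hs2 V1 L1 Ht) as [Hin|(z & Hz & Pz)].
    + destruct (IC t Hin) as (z & Hz & Pz). exists z. split; [apply in_or_app; auto|].
      replace ((2 / 3) ^ S (S n) * (snd s - fst s))
        with ((2 / 3) ^ S n * (snd s' - fst s')) by (rewrite (proj2 (proj2 Br)); simpl; ring).
      exact Pz.
    + exists z. split; [apply in_or_app; auto|].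
      assert (0 <= (2 / 3) ^ S (S n) * (snd s - fst s))
        by (apply Rmult_le_pos; [apply pow_le|]; lra).
      lra.
Qed.

End TernarySearch.

Definition tern_search (N : nat) (q : R) : strat :=
  repeat_strat (2 * N) (tern_phase N) (tern_update N q) (2 * N) (0, 2).
Definition tern_search_nodes (N : nat) (q : R) (l : list R) : list (R * R) :=
  repeat_nodes (2 * N) (tern_nodes N) (tern_update N q) (2 * N) (0, 2) l.

Definition dominates (F : R -> R) (q D : R) (Z : list (R * R)) : Prop :=
  forall t, 0 <= t <= 2 -> exists z, In z Z /\ psi F q t <= psi F q (fst z) + D.

Definition tern_err (eps : R) (N : nat) : R :=
  2 * bis_err eps N + 4 * (2 / 3) ^ (2 * N).

Lemma tern_search_ok F f eps N q l : smooth_convex_cdf F f -> 0 < eps < 1 ->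
  (1 <= N)%nat -> 0 <= q <= 2 ->
  valid_run eps F (tern_search N q) l -> length l = (2 * N * (2 * N))%nat ->
  (forall z, In z (tern_search_nodes N q l) -> good_node F (bis_err eps N) z) /\
  dominates F q (tern_err eps N) (tern_search_nodes N q l).
Proof.
  intros HF Heps HN Hq V Hl. unfold tern_search, tern_search_nodes in *.
  assert (Hrounds : S (2 * N - 1) = (2 * N)%nat) by lia.
  pose proof (tern_rounds F f HF eps Heps N q Hq (2 * N - 1) (0, 2) l) as T.
  rewrite Hrounds in T.
  destruct (T ltac:(simpl; lra) ltac:(simpl; lra) V Hl) as [G Dom].
  split; [exact G|].
  intros t Ht. destruct (Dom t Ht) as (z & Hz & Pz). exists z. split; [exact Hz|].
  unfold tern_err. cbn [fst snd] in Pz. lra.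
Qed.

(* A node (u, x) with x ~ Xi F u stands for the point (x, u - x) ~ (x, F x) of the
   graph of F.  [seg v z1 z2] interpolates linearly between the points of z1, z2. *)
Definition seg (v : R) (z1 z2 : R * R) : R :=
  let x1 := snd z1 in let y1 := fst z1 - snd z1 in
  let x2 := snd z2 in let y2 := fst z2 - snd z2 in
  y1 + (y2 - y1) * ((v - x1) / (x2 - x1)).

Definition covers (v : R) (p : (R * R) * (R * R)) : bool :=
  if Rle_dec (snd (fst p)) v then (if Rle_dec v (snd (snd p)) then true else false) else false.

Definition envelope (v : R) (Z : list (R * R)) : R :=
  fold_right (fun p acc => if covers v p then Rmin (seg v (fst p) (snd p)) acc else acc)
    1 (list_prod Z Z).

Definition hypothesis_cdf (tau : R) (Z : list (R * R)) (v : R) : R :=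
  if Rlt_dec v tau then 0 else envelope v Z.

Lemma covers_spec v p : covers v p = true <-> snd (fst p) <= v <= snd (snd p).
Proof.
  unfold covers. destruct (Rle_dec (snd (fst p)) v); destruct (Rle_dec v (snd (snd p)));
    split; intros; try lra; try discriminate; auto.
Qed.

(* Interpolation is a convex combination (this also holds when the two abscissae
   coincide, as then v - x1 = 0). *)
Lemma seg_convex_comb v z1 z2 : snd z1 <= v <= snd z2 ->
  exists mu, 0 <= mu <= 1 /\ v = (1 - mu) * snd z1 + mu * snd z2 /\
    seg v z1 z2 = (1 - mu) * (fst z1 - snd z1) + mu * (fst z2 - snd z2).
Proof.
  intros Hv. unfold seg.
  destruct (Req_dec (snd z1) (snd z2)) as [E|NE].
  - exists 0. replace (v - snd z1) with 0 by lra. unfold Rdiv. rewrite Rmult_0_l.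
    split; [lra|]. split; [lra|ring].
  - exists ((v - snd z1) / (snd z2 - snd z1)).
    assert (Hd : 0 < snd z2 - snd z1) by lra.
    split; [split|split; [field; lra|ring]].
    + apply Rdiv_le_0_compat; lra.
    + apply Rmult_le_reg_r with (snd z2 - snd z1); [lra|].
      unfold Rdiv. rewrite Rmult_assoc, Rinv_l; lra.
Qed.

Lemma envelope_le1 v Z : envelope v Z <= 1.
Proof.
  unfold envelope. induction (list_prod Z Z) as [|p Lp IH]; simpl; [lra|].
  destruct (covers v p); [eapply Rle_trans; [apply Rmin_r|]|]; assumption.
Qed.

Lemma envelope_lower v Z B : B <= 1 ->
  (forall z1 z2, In z1 Z -> In z2 Z -> snd z1 <= v <= snd z2 -> B <= seg v z1 z2) ->
  B <= envelope v Z.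
Proof.
  intros H1 H2. unfold envelope.
  assert (Hp : forall p, In p (list_prod Z Z) -> covers v p = true -> B <= seg v (fst p) (snd p)).
  { intros [z1 z2] Hin%in_prod_iff Hc%covers_spec. apply H2; tauto. }
  induction (list_prod Z Z) as [|p Lp IH]; simpl; [assumption|].
  assert (B <= fold_right (fun p acc => if covers v p then Rmin (seg v (fst p) (snd p)) acc
    else acc) 1 Lp) by (apply IH; intros; apply Hp; simpl; auto).
  destruct (covers v p) eqn:E; [apply Rmin_glb; [apply Hp; simpl; auto|]|]; assumption.
Qed.

Lemma envelope_upper v Z z1 z2 : In z1 Z -> In z2 Z -> snd z1 <= v <= snd z2 ->
  envelope v Z <= seg v z1 z2.
Proof.
  intros H1 H2 Hv. unfold envelope.
  assert (Hin : In (z1, z2) (list_prod Z Z)) by (apply in_prod; assumption).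
  assert (Hc : covers v (z1, z2) = true) by (apply covers_spec; exact Hv).
  induction (list_prod Z Z) as [|p Lp IH]; [destruct Hin|].
  destruct Hin as [->|Hin]; simpl.
  - rewrite Hc. apply Rmin_l.
  - destruct (covers v p); [eapply Rle_trans; [apply Rmin_r|]|]; auto.
Qed.

Lemma envelope_below v Z z1 z2 Y : In z1 Z -> In z2 Z -> snd z1 <= v <= snd z2 ->
  fst z1 - snd z1 <= Y -> fst z2 - snd z2 <= Y -> envelope v Z <= Y.
Proof.
  intros H1 H2 Hv Y1 Y2. eapply Rle_trans; [apply (envelope_upper v Z z1 z2); assumption|].
  destruct (seg_convex_comb v z1 z2 Hv) as (mu & Hmu & _ & ->). nra.
Qed.

(* By concavity of Xi F, interpolations between good nodes never fall below F by
   more than dd (in both directions): the lower half of the Lévy bound. *)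
Lemma seg_lower F f dd v z1 z2 : smooth_convex_cdf F f -> good_node F dd z1 -> good_node F dd z2 ->
  snd z1 <= v <= snd z2 -> F (v - dd) - dd <= seg v z1 z2.
Proof.
  intros HF [G1 B1%Rabs_le_inv] [G2 B2%Rabs_le_inv] Hv.
  destruct (seg_convex_comb v z1 z2 Hv) as (mu & Hmu & Ev & Es). rewrite Es.
  set (u := (1 - mu) * fst z1 + mu * fst z2).
  pose proof (Xi_concave F f HF (fst z1) (fst z2) mu G1 G2 Hmu) as C. fold u in C.
  pose proof (Xi_spec F f HF u).
  assert (Hx : v - dd <= Xi F u) by nra.
  pose proof (cdf_mono F f HF _ _ Hx).
  assert (E : (1 - mu) * (fst z1 - snd z1) + mu * (fst z2 - snd z2) = u - v)
    by (rewrite Ev; unfold u; ring).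
  lra.
Qed.

Lemma nat_floor y : 0 <= y -> exists i : nat, INR i <= y < INR i + 1.
Proof.
  intros Hy. destruct (archimed y) as [A1 A2].
  assert (Hz : (0 < up y)%Z) by (apply lt_IZR; lra).
  exists (Z.to_nat (up y - 1)). rewrite INR_IZR_INZ, Z2Nat.id, minus_IZR by lia. simpl. lra.
Qed.

Definition grid_pt (m i : nat) : R := 2 * INR i / INR m.

Definition has_grid (m : nat) (Z : list (R * R)) : Prop :=
  forall i, (i <= m)%nat -> exists x, In (grid_pt m i, x) Z.

Lemma grid_pt_range m i : 1 <= INR m -> (i <= m)%nat -> 0 <= grid_pt m i <= 2.
Proof.
  intros Hm Hi%le_INR. pose proof (pos_INR i). unfold grid_pt. split.
  - apply Rdiv_le_0_compat; lra.
  - apply Rmult_le_reg_r with (INR m); [lra|]. unfold Rdiv.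
    rewrite Rmult_assoc, Rinv_l, Rmult_1_r; lra.
Qed.

Lemma grid_around m u : 1 <= INR m -> 0 <= u <= 2 ->
  exists i j, (i <= m)%nat /\ (j <= m)%nat /\ grid_pt m i <= u <= grid_pt m j /\
    grid_pt m j - grid_pt m i <= 2 / INR m.
Proof.
  intros Hm Hu.
  assert (Hg : forall i, grid_pt m i * INR m = 2 * INR i).
  { intros i. unfold grid_pt, Rdiv. rewrite Rmult_assoc, Rinv_l, Rmult_1_r by lra. reflexivity. }
  assert (H2 : 2 / INR m * INR m = 2) by (field; lra).
  destruct (nat_floor (u * INR m / 2)) as (i & Hi1 & Hi2); [apply Rmult_le_pos; nra|].
  assert (Him : (i <= m)%nat) by (apply INR_le; nra).
  assert (Hlo : grid_pt m i <= u) by (apply Rmult_le_reg_r with (INR m); [lra|]; rewrite Hg; lra).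
  destruct (Nat.eq_dec i m) as [->|Hne].
  - exists m, m. assert (grid_pt m m = 2) by (unfold grid_pt; field; lra).
    split; [lia|]. split; [lia|]. split; [lra|].
    assert (0 < 2 / INR m) by (apply Rdiv_lt_0_compat; lra). lra.
  - exists i, (S i). split; [lia|]. split; [lia|].
    split; [split; [exact Hlo|]|];
      apply Rmult_le_reg_r with (INR m); try lra;
      rewrite ?Rmult_minus_distr_r, !Hg, ?H2, S_INR; lra.
Qed.

Lemma slope_grid m sg : 1 <= INR m -> 0 <= sg <= 1 ->
  exists k, (k <= S m)%nat /\ sg <= INR k / INR m <= sg + / INR m.
Proof.
  intros Hm Hsg.
  destruct (nat_floor (sg * INR m)) as (i & Hi1 & Hi2); [nra|].
  exists (S i). rewrite S_INR. split; [apply INR_le; rewrite !S_INR; nra|].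
  assert (Hk : (INR i + 1) / INR m * INR m = INR i + 1) by (field; lra).
  assert (Hs : (sg + / INR m) * INR m = sg * INR m + 1) by (field; lra).
  split; apply Rmult_le_reg_r with (INR m); lra.
Qed.

Lemma slope_range m k : 1 <= INR m -> (k <= S m)%nat -> 0 <= INR k / INR m <= 2.
Proof.
  intros Hm Hk%le_INR. rewrite S_INR in Hk. pose proof (pos_INR k). split.
  - apply Rdiv_le_0_compat; lra.
  - apply Rmult_le_reg_r with (INR m); [lra|]. unfold Rdiv.
    rewrite Rmult_assoc, Rinv_l, Rmult_1_r; lra.
Qed.

Lemma max_below (P : list R) u : (exists p, In p P /\ p <= u) ->
  exists a, In a P /\ a <= u /\ forall p, In p P -> p <= u -> p <= a.
Proof.
  induction P as [|p P IH]; intros (p0 & Hp0 & Hle); [destruct Hp0|].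
  destruct (classic (exists p, In p P /\ p <= u)) as [Ex|NEx].
  - destruct (IH Ex) as (a & Ha & Ha1 & Ha2).
    destruct (Rle_dec p u) as [Hp|Hp].
    + exists (Rmax p a). split; [unfold Rmax; destruct Rle_dec; simpl; auto|].
      split; [apply Rmax_lub; lra|]. intros p' [<-|Hp'] Hl; [apply Rmax_l|].
      eapply Rle_trans; [apply Ha2; auto|apply Rmax_r].
    + exists a. split; [simpl; auto|]. split; [exact Ha1|].
      intros p' [<-|Hp'] Hl; [lra|auto].
  - destruct Hp0 as [<-|Hp0]; [|exfalso; apply NEx; eauto].
    exists p. split; [simpl; auto|]. split; [exact Hle|].
    intros p' [<-|Hp'] Hl; [lra|]. exfalso; apply NEx; eauto.
Qed.

Lemma min_above (P : list R) u : (exists p, In p P /\ u <= p) ->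
  exists b, In b P /\ u <= b /\ forall p, In p P -> u <= p -> b <= p.
Proof.
  intros (p & Hp & Hl). destruct (max_below (map Ropp P) (- u)) as (a & Ha & Ha1 & Ha2).
  { exists (- p). split; [apply in_map; auto|lra]. }
  apply in_map_iff in Ha. destruct Ha as (b & <- & Hb).
  exists b. split; [exact Hb|]. split; [lra|]. intros p' Hp' Hl'.
  assert (- p' <= - b) by (apply Ha2; [apply in_map; auto|lra]). lra.
Qed.

Lemma node_bracket m Z u : 1 <= INR m -> has_grid m Z -> 0 <= u <= 2 ->
  exists za zb, In za Z /\ In zb Z /\ fst za <= u <= fst zb /\
    fst zb - fst za <= 2 / INR m /\ (forall z, In z Z -> fst z <= fst za \/ fst zb <= fst z).
Proof.
  intros Hm HG Hu.
  destruct (grid_around m u Hm Hu) as (i & j & Hi & Hj & Hij & Hw).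
  assert (InP : forall k, (k <= m)%nat -> In (grid_pt m k) (map fst Z)).
  { intros k Hk. destruct (HG k Hk) as (x & Hx). apply in_map_iff. exists (grid_pt m k, x); auto. }
  destruct (max_below (map fst Z) u) as (a & Ha & Ha1 & Ha2); [exists (grid_pt m i); split; auto; lra|].
  destruct (min_above (map fst Z) u) as (b & Hb & Hb1 & Hb2); [exists (grid_pt m j); split; auto; lra|].
  pose proof (Ha2 _ (InP i Hi) ltac:(lra)). pose proof (Hb2 _ (InP j Hj) ltac:(lra)).
  apply in_map_iff in Ha as (za & <- & Hza). apply in_map_iff in Hb as (zb & <- & Hzb).
  exists za, zb. split; [exact Hza|]. split; [exact Hzb|]. split; [lra|]. split; [lra|].
  intros z Hz. assert (Hf : In (fst z) (map fst Z)) by (apply in_map; exact Hz).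
  destruct (Rle_dec (fst z) u); [left; auto|right; apply Hb2; auto; lra].
Qed.

Section UpperBound.

Variables F f : R -> R.
Hypothesis HF : smooth_convex_cdf F f.
Variable m : nat.
Hypothesis Hm : 1 <= INR m.
Variables dd D : R.
Hypothesis HD : 0 <= D.
Variable Z : list (R * R).
Hypothesis Zgood : forall z, In z Z -> good_node F dd z.
Hypothesis Zdom : forall k, (k <= S m)%nat -> dominates F (INR k / INR m) D Z.

(* Between two consecutive node positions a < b, Xi F lies below its chord up to
   D + (b - a)/m: the node maximising psi F q for a slope q just above the chord
   slope sits outside (a,b), and concavity of psi F q transfers the bound. *)
Lemma Xi_below_chord a b mu : 0 <= a -> a < b -> b <= 2 ->
  (forall z, In z Z -> fst z <= a \/ b <= fst z) -> 0 <= mu <= 1 ->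
  Xi F ((1 - mu) * a + mu * b) <= (1 - mu) * Xi F a + mu * Xi F b + D + (b - a) / INR m.
Proof.
  intros Ha Hab Hb Hsep Hmu.
  set (u := (1 - mu) * a + mu * b).
  set (sg := (Xi F b - Xi F a) / (b - a)).
  assert (Hs : sg * (b - a) = Xi F b - Xi F a) by (unfold sg; field; lra).
  assert (Hsg : 0 <= sg <= 1).
  { pose proof (Xi_mono F f HF a b ltac:(lra)). pose proof (Xi_lip F f HF a b ltac:(lra)).
    split; [unfold sg; apply Rdiv_le_0_compat; lra|nra]. }
  destruct (slope_grid m sg Hm Hsg) as (k & Hk & Hq1 & Hq2).
  set (q := INR k / INR m) in *.
  destruct (Zdom k Hk u ltac:(unfold u; nra)) as (z & Hz & Pz). fold q in Pz.
  destruct (Zgood z Hz) as [Hzr _].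
  assert (Hm' : 0 < / INR m) by (apply Rinv_0_lt_compat; lra).
  assert (Hba : (b - a) / INR m = (b - a) * / INR m) by reflexivity.
  assert (Hua : u - a = mu * (b - a)) by (unfold u; ring).
  assert (Hbu : b - u = (1 - mu) * (b - a)) by (unfold u; ring).
  assert (Hu : a <= u <= b) by (unfold u; nra).
  destruct (Hsep z Hz) as [Za|Zb].
  - assert (Pa : psi F q u - D <= psi F q a).
    { destruct (Req_dec (fst z) u) as [E|NE]; [replace a with u by lra; lra|].
      apply (concave_above_min (fst z) a u (psi F q (fst z)) _ (psi F q u));
        try lra.
      apply (psi_concave3 F f HF); lra. }
    unfold psi in Pa.
    assert (q * (u - a) <= sg * (u - a) + / INR m * (b - a)).
    { rewrite Hua. assert (0 <= mu * (b - a)) by nra. nra. }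
    fold u. nra.
  - assert (Pb : psi F q u - D <= psi F q b).
    { destruct (Req_dec (fst z) u) as [E|NE]; [replace b with u by lra; lra|].
      apply (concave_above_min u b (fst z) (psi F q u) _ (psi F q (fst z)));
        try lra.
      apply (psi_concave3 F f HF); lra. }
    unfold psi in Pb.
    assert (sg * (b - u) <= q * (b - u)) by (rewrite Hbu; assert (0 <= (1 - mu) * (b - a)) by nra; nra).
    assert (0 <= (b - a) * / INR m) by (apply Rmult_le_pos; lra).
    fold u. nra.
Qed.

Variables e tau : R.
Hypothesis He : dd + D + 2 / (INR m * INR m) <= e.
Hypothesis Hdd0 : 0 <= dd.
Hypothesis Hdd : 2 * dd < e.
Hypothesis Htau : dd <= tau.

Lemma envelope_upper_chord v za zb : In za Z -> In zb Z -> fst za < fst zb ->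
  fst zb - fst za <= 2 / INR m -> (forall z, In z Z -> fst z <= fst za \/ fst zb <= fst z) ->
  snd za <= v <= snd zb -> envelope v Z <= F (v + e) + e.
Proof.
  intros Ha Hb Hab Hw Hsep Hv.
  destruct (Zgood za Ha) as [Ra Ga%Rabs_le_inv]. destruct (Zgood zb Hb) as [Rb Gb%Rabs_le_inv].
  eapply Rle_trans; [apply (envelope_upper v Z za zb); assumption|].
  destruct (seg_convex_comb v za zb Hv) as (mu & Hmu & Ev & ->).
  set (u := (1 - mu) * fst za + mu * fst zb).
  pose proof (Xi_below_chord (fst za) (fst zb) mu ltac:(lra) Hab ltac:(lra) Hsep Hmu) as C.
  fold u in C.
  assert (Hwm : (fst zb - fst za) / INR m <= 2 / (INR m * INR m)).
  { unfold Rdiv. rewrite Rinv_mult, <- Rmult_assoc.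
    apply Rmult_le_compat_r; [apply Rlt_le, Rinv_0_lt_compat; lra|exact Hw]. }
  assert (Hx : Xi F u <= v + e).
  { assert ((1 - mu) * Xi F (fst za) <= (1 - mu) * (snd za + dd)) by (apply Rmult_le_compat_l; lra).
    assert (mu * Xi F (fst zb) <= mu * (snd zb + dd)) by (apply Rmult_le_compat_l; lra).
    lra. }
  pose proof (cdf_mono F f HF _ _ Hx). pose proof (Xi_spec F f HF u).
  assert (E : (1 - mu) * (fst za - snd za) + mu * (fst zb - snd zb) = u - v)
    by (rewrite Ev; unfold u; ring).
  lra.
Qed.

Hypothesis Zgrid : has_grid m Z.

(* The upper half of the Lévy bound, away from the trivial regions: bracket the
   position u0 = x0 + F x0 of x0 = v + e/2 by two consecutive nodes. *)
Lemma envelope_upper_bound v : tau <= v -> v + e < 1 -> envelope v Z <= F (v + e) + e.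
Proof.
  intros Hv1 Hv2.
  set (x0 := v + e / 2). set (u0 := x0 + F x0).
  pose proof (cdf_range F f HF x0).
  assert (Hx0 : 0 <= x0 <= 1) by (unfold x0; lra).
  assert (Hx0v : v + e / 2 = x0) by reflexivity.
  assert (Hu0 : 0 <= u0 <= 2) by (unfold u0; lra).
  assert (Xu0 : Xi F u0 = x0) by (apply (Xi_unique F f HF); reflexivity).
  destruct (node_bracket m Z u0 Hm Zgrid Hu0) as (za & zb & Ha & Hb & Hab & Hw & Hsep).
  destruct (Zgood za Ha) as [Ra Ga%Rabs_le_inv]. destruct (Zgood zb Hb) as [Rb Gb%Rabs_le_inv].
  pose proof (Xi_mono F f HF _ _ (proj1 Hab)) as Xa.
  pose proof (Xi_mono F f HF _ _ (proj2 Hab)) as Xb.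
  rewrite Xu0 in Xa, Xb.
  destruct (Rle_dec (snd za) v) as [Ca|Ca].
  -
    apply (envelope_upper_chord v za zb Ha Hb); [|exact Hw|exact Hsep|lra].
    destruct (Req_dec (fst za) (fst zb)) as [E|NE]; [|lra].
    assert (Eu : fst za = u0) by lra. rewrite Eu, Xu0 in Ga. lra.
  - (* v lies left of the graph point of za: interpolate instead between the node
       at position 0 and za, both below height F (v + e) + dd. *)
    destruct (Zgrid 0%nat ltac:(lia)) as (x00 & Z0).
    replace (grid_pt m 0) with 0 in Z0 by (unfold grid_pt; simpl; field; lra).
    destruct (Zgood _ Z0) as [_ G0%Rabs_le_inv].
    simpl in G0. rewrite (Xi_0 F f HF) in G0.
    pose proof (cdf_range F f HF (v + e)).
    pose proof (cdf_mono F f HF (Xi F (fst za)) (v + e) ltac:(lra)).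
    pose proof (Xi_spec F f HF (fst za)).
    apply (envelope_below v Z _ za _ Z0 Ha); simpl; lra.
Qed.

End UpperBound.

Lemma levy_cond_of_nodes F f m dd D e tau Z : smooth_convex_cdf F f -> 1 <= INR m ->
  0 <= dd -> 0 <= D ->
  (forall z, In z Z -> good_node F dd z) -> has_grid m Z ->
  (forall k, (k <= S m)%nat -> dominates F (INR k / INR m) D Z) ->
  dd + D + 2 / (INR m * INR m) <= e -> 2 * dd < e -> dd <= tau -> tau <= e ->
  levy_cond F (hypothesis_cdf tau Z) e.
Proof.
  intros HF Hm Hdd HD Zgood Zgrid Zdom He1 He2 Ht1 Ht2 v.
  pose proof (cdf_range F f HF (v - e)). pose proof (cdf_range F f HF (v + e)).
  unfold hypothesis_cdf. destruct (Rlt_dec v tau) as [Lt|Ge].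
  - rewrite (cdf_zero F f HF (v - e)) by lra. lra.
  - split.
    + apply envelope_lower; [lra|]. intros z1 z2 H1 H2 Hv.
      pose proof (seg_lower F f dd v z1 z2 HF (Zgood z1 H1) (Zgood z2 H2) Hv).
      pose proof (cdf_mono F f HF (v - e) (v - dd) ltac:(lra)). lra.
    + destruct (Rle_dec 1 (v + e)) as [Big|Small].
      * rewrite (cdf_one F f HF (v + e)) by lra. pose proof (envelope_le1 v Z). lra.
      * apply (envelope_upper_bound F f HF m Hm dd D HD Z Zgood Zdom e tau); try assumption; lra.
Qed.

Lemma levy_le_of_cond F G e : 0 <= e -> levy_cond F G e -> Rbar_le (levy F G) (Finite e).
Proof.
  intros He HG. unfold levy.
  destruct (Glb_Rbar_correct (fun e => 0 <= e /\ levy_cond F G e)) as [Hlb _].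
  apply Hlb. split; assumption.
Qed.

Definition phaseA (m N : nat) : strat :=
  repeat_strat N (fun i => Bis (grid_pt m i)) (fun i _ => S i) (S m) 0%nat.
Definition nodesA (m N : nat) (l : list R) : list (R * R) :=
  repeat_nodes N (fun i l1 => (grid_pt m i, bis_res (grid_pt m i) l1) :: nil)
    (fun i _ => S i) (S m) 0%nat l.
Definition phaseB (m N : nat) : strat :=
  repeat_strat (2 * N * (2 * N)) (fun k => tern_search N (INR k / INR m)) (fun k _ => S k)
    (S (S m)) 0%nat.
Definition nodesB (m N : nat) (l : list R) : list (R * R) :=
  repeat_nodes (2 * N * (2 * N)) (fun k l1 => tern_search_nodes N (INR k / INR m) l1)
    (fun k _ => S k) (S (S m)) 0%nat l.
Definition lengthA (m N : nat) : nat := (S m * N)%nat.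

Definition algo (eps : R) (m N : nat) : query_alg :=
  QueryAlg (lengthA m N + S (S m) * (2 * N * (2 * N)))
    (seq_strat (lengthA m N) (phaseA m N) (fun _ => phaseB m N))
    (fun ans => hypothesis_cdf (2 * eps)
       (nodesA m N (firstn (lengthA m N) ans) ++ nodesB m N (skipn (lengthA m N) ans))).

Section Phases.

Variables F f : R -> R.
Hypothesis HF : smooth_convex_cdf F f.
Variable eps : R.
Hypothesis Heps : 0 < eps < 1.
Variables m N : nat.
Hypothesis Hm : 1 <= INR m.
Hypothesis HN : (1 <= N)%nat.

Lemma phaseA_nodes l : valid_run eps F (phaseA m N) l -> length l = (S m * N)%nat ->
  (forall z, In z (nodesA m N l) -> good_node F (bis_err eps N) z) /\ has_grid m (nodesA m N l).
Proof.
  intros V Hl. split.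
  - apply (repeat_nodes_good eps F N _ _ _ (S m) 0%nat l V Hl).
    intros k l1 Hk V1 L1 z [<-|[]]. pose proof (grid_pt_range m k Hm ltac:(lia)).
    split; [assumption|]. rewrite <- L1. apply (bis_correct F f HF eps Heps); assumption.
  - intros i Hi.
    apply (repeat_nodes_phase eps F N (fun i => Bis (grid_pt m i)) _
      (fun k ns => exists x, In (grid_pt m k, x) ns) (S m) 0%nat l); try assumption; try lia.
    + intros k l1 l2 (x & Hx). exists x. apply in_or_app; auto.
    + intros k l1 l2 (x & Hx). exists x. apply in_or_app; auto.
    + intros k l1 _ _ _. exists (bis_res (grid_pt m k) l1). simpl; auto.
Qed.

Lemma phaseB_nodes l : valid_run eps F (phaseB m N) l ->
  length l = (S (S m) * (2 * N * (2 * N)))%nat ->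
  (forall z, In z (nodesB m N l) -> good_node F (bis_err eps N) z) /\
  (forall k, (k <= S m)%nat -> dominates F (INR k / INR m) (tern_err eps N) (nodesB m N l)).
Proof.
  intros V Hl.
  assert (T : forall k l1, (0 <= k < 0 + S (S m))%nat ->
      valid_run eps F (tern_search N (INR k / INR m)) l1 -> length l1 = (2 * N * (2 * N))%nat ->
      (forall z, In z (tern_search_nodes N (INR k / INR m) l1) -> good_node F (bis_err eps N) z) /\
      dominates F (INR k / INR m) (tern_err eps N) (tern_search_nodes N (INR k / INR m) l1)).
  { intros k l1 Hk. apply (tern_search_ok F f); try assumption. apply slope_range; [exact Hm|lia]. }
  split.
  - apply (repeat_nodes_good eps F _ _ _ _ (S (S m)) 0%nat l V Hl).
    intros k l1 Hk V1 L1. apply (T k l1 Hk V1 L1).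
  - intros k Hk t Ht.
    apply (repeat_nodes_phase eps F _ (fun k => tern_search N (INR k / INR m)) _
      (fun k ns => exists z, In z ns /\
         psi F (INR k / INR m) t <= psi F (INR k / INR m) (fst z) + tern_err eps N)
      (S (S m)) 0%nat l); try assumption; try lia.
    + intros k' l1 l2 (z & Hz & Pz). exists z. split; [apply in_or_app; auto|exact Pz].
    + intros k' l1 l2 (z & Hz & Pz). exists z. split; [apply in_or_app; auto|exact Pz].
    + intros k' l1 Hk' V1 L1. apply (proj2 (T k' l1 Hk' V1 L1) t Ht).
Qed.

Lemma algo_nodes ans : consistent_run eps F (algo eps m N) ans ->
  let Z := nodesA m N (firstn (lengthA m N) ans) ++ nodesB m N (skipn (lengthA m N) ans) in
  (forall z, In z Z -> good_node F (bis_err eps N) z) /\ has_grid m Z /\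
  (forall k, (k <= S m)%nat -> dominates F (INR k / INR m) (tern_err eps N) Z).
Proof.
  intros [Hlen Hv] Z. simpl in Hlen.
  assert (V : valid_run eps F (seq_strat (lengthA m N) (phaseA m N) (fun _ => phaseB m N)) ans)
    by (intros i Hi; apply Hv; simpl; lia).
  destruct (valid_seq eps F _ _ _ ans V) as [VA VB]; [lia|].
  destruct (phaseA_nodes _ VA) as [GA Grid]; [rewrite length_firstn; unfold lengthA in *; lia|].
  destruct (phaseB_nodes _ VB) as [GB Dom]; [rewrite length_skipn; lia|].
  split; [|split].
  - intros z [Hz|Hz]%in_app_or; auto.
  - intros i Hi. destruct (Grid i Hi) as (x & Hx). exists x. apply in_or_app; auto.
  - intros k Hk t Ht. destruct (Dom k Hk t Ht) as (z & Hz & Pz).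
    exists z. split; [apply in_or_app; auto|exact Pz].
Qed.

End Phases.

Lemma INR_up y : 0 <= y -> INR (Z.to_nat (up y)) = IZR (up y).
Proof.
  intros Hy. destruct (archimed y) as [A1 A2].
  rewrite INR_IZR_INZ, Z2Nat.id by (apply le_IZR; lra). reflexivity.
Qed.

Lemma choose_m eps : 0 < eps < 1 ->
  let m := Z.to_nat (up (2 / sqrt eps)) in
  1 <= INR m /\ INR m <= 2 / sqrt eps + 1 /\ 2 / (INR m * INR m) <= eps.
Proof.
  intros He m. set (r := sqrt eps) in *.
  assert (Hr : 0 < r) by (apply sqrt_lt_R0; lra).
  assert (Hrr : r * r = eps) by (apply sqrt_sqrt; lra).
  assert (H2r : 2 / r * r = 2) by (field; lra).
  assert (Hr1 : r < 1) by nra.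
  assert (H2 : 2 < 2 / r) by nra.
  destruct (archimed (2 / r)) as [A1 A2].
  assert (Em : INR m = IZR (up (2 / r))) by (apply INR_up; lra).
  assert (Hmr : 2 < INR m * r) by nra.
  split; [lra|]. split; [lra|].
  assert (0 < INR m) by lra.
  apply Rmult_le_reg_r with (INR m * INR m); [nra|].
  unfold Rdiv. rewrite Rmult_assoc, Rinv_l, Rmult_1_r by nra. nra.
Qed.

Lemma choose_N eps : 0 < eps < 1 ->
  let N := Z.to_nat (up (ln (2 / eps) / ln 2)) in
  (1 <= N)%nat /\ (/ 2) ^ N <= eps / 2 /\ INR N <= 2 * (1 + ln (/ eps)).
Proof.
  intros He N.
  assert (Hl2 : / 2 < ln 2) by apply ln_lt_2.
  assert (HL : 0 < ln (/ eps)).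
  { rewrite <- ln_1. apply ln_increasing; [lra|]. rewrite <- Rinv_1. apply Rinv_lt_contravar; lra. }
  assert (E2 : ln (2 / eps) = ln 2 + ln (/ eps))
    by (unfold Rdiv; apply ln_mult; [lra|apply Rinv_0_lt_compat; lra]).
  set (y := ln (2 / eps) / ln 2) in *.
  assert (Ey : y * ln 2 = ln (2 / eps)) by (unfold y; field; lra).
  assert (Hy : 0 < y) by (unfold y; apply Rdiv_lt_0_compat; lra).
  destruct (archimed y) as [B1 B2].
  assert (EN : INR N = IZR (up y)) by (apply INR_up; lra).
  split; [|split].
  - apply INR_le. rewrite EN. simpl. apply IZR_le.
    assert (0 < up y)%Z by (apply lt_IZR; lra). lia.
  - assert (Hp : 2 / eps < 2 ^ N).
    { apply ln_lt_inv; [apply Rdiv_lt_0_compat; lra|apply pow_lt; lra|].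
      rewrite ln_pow by lra. nra. }
    rewrite pow_inv. pose proof (pow_lt 2 N ltac:(lra)).
    assert (0 < 2 / eps) by (apply Rdiv_lt_0_compat; lra).
    apply Rle_trans with (/ (2 / eps)); [apply Rlt_le, Rinv_lt_contravar; nra|].
    right. field. lra.
  - assert (y <= 1 + 2 * ln (/ eps)).
    { apply Rmult_le_reg_r with (ln 2); [lra|]. rewrite Ey, E2. nra. }
    lra.
Qed.

Lemma error_budget eps N : 0 < eps < 1 -> (/ 2) ^ N <= eps / 2 ->
  0 <= bis_err eps N <= 2 * eps /\ 0 <= tern_err eps N <= 6 * eps.
Proof.
  intros He HN.
  assert (Hb : 0 <= bis_err eps N <= 2 * eps).
  { split; [apply bis_err_nonneg; lra|].
    unfold bis_err. assert (eps ^ 2 / 2 <= eps / 2) by (simpl; nra). lra. }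
  split; [exact Hb|].
  assert ((2 / 3) ^ (2 * N) <= (/ 2) ^ N).
  { rewrite pow_mult. apply pow_incr. split; [apply pow_le; lra|]. simpl; lra. }
  pose proof (pow_le (2 / 3) (2 * N) ltac:(lra)).
  unfold tern_err. lra.
Qed.

(* The algorithm makes O(m N^2) = O(eps^(-1/2) log^2(1/eps)) queries. *)
Lemma algo_queries eps m N : 0 < eps < 1 -> INR m <= 2 / sqrt eps + 1 -> (1 <= N)%nat ->
  INR N <= 2 * (1 + ln (/ eps)) ->
  INR (nq (algo eps m N)) <= 100 * / sqrt eps * (1 + ln (/ eps)) ^ 2.
Proof.
  intros He Hm HN1 HN2. simpl nq. unfold lengthA.
  repeat (rewrite plus_INR || rewrite mult_INR || rewrite S_INR). simpl INR.
  assert (Hr : 0 < sqrt eps < 1).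
  { split; [apply sqrt_lt_R0; lra|]. rewrite <- sqrt_1. apply sqrt_lt_1; lra. }
  assert (Hir : 1 <= / sqrt eps) by (rewrite <- Rinv_1; apply Rinv_le_contravar; lra).
  assert (HL : 0 <= ln (/ eps)).
  { rewrite <- ln_1. apply Rlt_le, ln_increasing; [lra|].
    rewrite <- Rinv_1. apply Rinv_lt_contravar; lra. }
  pose proof (pos_INR m). unfold Rdiv in Hm.
  set (L := ln (/ eps)) in *. set (n := INR N) in *. set (M := INR m) in *.
  assert (Hn1 : 1 <= n) by (unfold n; apply le_INR in HN1; simpl in HN1; lra).
  assert (HM : 0 <= M + 2 <= 5 * / sqrt eps) by lra.
  assert (Hnn : n <= n * n) by nra.
  assert (Hsum : (M + 1) * n + (M + 1 + 1) * ((1 + 1) * n * ((1 + 1) * n))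
                 <= 5 * (M + 2) * (n * n)) by nra.
  assert (Hn2 : n * n <= 4 * ((1 + L) * (1 + L))) by nra.
  assert (5 * (M + 2) * (n * n) <= 5 * (5 * / sqrt eps) * (4 * ((1 + L) * (1 + L)))).
  { apply Rmult_le_compat; nra. }
  simpl pow. lra.
Qed.

Theorem theorem9 :
  exists (C K : R) (k : nat),
    0 < C /\ 0 < K /\
    forall eps : R, 0 < eps < 1 ->
      exists A : query_alg,
        INR (nq A) <= K * / sqrt eps * (1 + ln (/ eps)) ^ k /\
        forall (F f : R -> R), smooth_convex_cdf F f ->
          forall ans : list R, consistent_run eps F A ans ->
            Rbar_le (levy F (output A ans)) (Finite (C * eps)).
Proof.
  exists 10, 100, 2%nat. split; [lra|]. split; [lra|].
  intros eps He.
  destruct (choose_m eps He) as (Hm1 & Hm2 & Hm3).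
  destruct (choose_N eps He) as (HN1 & HN2 & HN3).
  set (m := Z.to_nat (up (2 / sqrt eps))) in *.
  set (N := Z.to_nat (up (ln (2 / eps) / ln 2))) in *.
  exists (algo eps m N). split; [apply algo_queries; assumption|].
  intros F f HF ans Hrun.
  destruct (algo_nodes F f HF eps He m N Hm1 HN1 ans Hrun) as (Zgood & Zgrid & Zdom).
  destruct (error_budget eps N He HN2) as [Hdd HD].
  apply levy_le_of_cond; [lra|].
  apply (levy_cond_of_nodes F f m (bis_err eps N) (tern_err eps N)); try assumption; lra.
Qed.
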